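(* Let $G = (V, E, b, c)$ be a weighted hypergraph with $n$ vertices in which every vertex belongs to some edge, and let $\mathtt{OPT}$ be a minimum-cost edge cover of $G$. For any $0 \leq \epsilon < 1$, algorithm SSSC outputs a $(1-\epsilon)$-cover certificate for $G$ whose image has cost $O\left( \min\{ 1/\epsilon, \sqrt{n} \} \cdot c(\mathtt{OPT}) \right)$.
   Context: A weighted hypergraph $G = (V, E, b, c)$ has vertex set $V$ ($|V| = n$), a multiset $E$ of non-empty edges $e \subseteq V$, benefits $b : V \to \mathbb{Q}_{>0}$ and costs $c : E \to \mathbb{Q}_{>0}$; $b(U) = \sum_{v \in U} b(v)$, $c(F) = \sum_{e \in F} c(e)$. An edge cover is a set $F \subseteq E$ whose union is $V$. A $\delta$-cover certificate for $G$ is a partial function $\chi$ from $V$ to edge identifiers such that (1) if $v \in \mathrm{Dom}(\chi)$ and $\chi(v) = \mathrm{id}(e)$ then $v \in e$, and (2) $b(\mathrm{Dom}(\chi)) \geq \delta \cdot b(V)$; $\mathrm{Im}(\chi)$ is the set of edges whose identifiers are values of $\chi$. Convention: $\min\{1/x, y\} = y$ when $x = 0$. Edges arrive in a stream $e_0, e_1, \dots$ with unique identifiers $\mathrm{id}(e)$. Procedure COVER (on a weighted hypergraph with benefit function $\beta$) maintains for each $v$ a variable $\mathrm{eid}(v)$ (initially NULL) and an integer $\mathrm{eff}(v)$ (initially $-\infty$); $\mathrm{eff}_t(v)$ is its value just before $e_t$ is processed. For $T \subseteq e_t$, $\mathrm{lev}_t(T) = \lceil \lg(\beta(T)/c(e_t))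 \rceil$ ($\lg$ = base-2 logarithm), and $T$ is effective at time $t$ if $\mathrm{lev}_t(T) > \mathrm{eff}_t(v)$ for all $v \in T$. When $e_t$ arrives, COVER picks an effective $T \subseteq e_t$ of largest $\beta(T)$ and for every $v \in T$ sets $\mathrm{eid}(v) \leftarrow \mathrm{id}(e_t)$, $\mathrm{eff}(v) \leftarrow \mathrm{lev}_t(T)$. Algorithm SSSC runs in parallel over the stream: (P1) COVER with benefits $b$, with final values $\mathrm{eid}_\infty(\cdot), \mathrm{eff}_\infty(\cdot)$; (P2) COVER with all benefits equal to $1$, with final values $\mathrm{eid}^{\mathbf{1}}_\infty(\cdot), \mathrm{eff}^{\mathbf{1}}_\infty(\cdot)$; (P3) for each $v$, $\mathrm{emin}(v)$ = identifier of a minimum-cost edge containing $v$ seen so far; (P4) stores $b(v)$ for each $v$. At the end, given $\epsilon$: if $\epsilon \geq 1/\sqrt{n}$, let $r^*$ be the largest integer with $b(I(\leq r^* )) \leq \epsilon b(V)$ where $I(\leq r) = \{ v : \mathrm{eff}_\infty(v) \leq r \}$, and output the partial function mapping each $v \in V \setminus I(\leq r^* )$ to $\mathrm{eid}_\infty(v)$. If $\epsilon < 1/\sqrt{n}$, let $r^*$ be the largest integer with $|I^{\mathbf{1}}(\leq r^* )| \leq \sqrt{n}$ where $I^{\mathbf{1}}(\leq r) = \{ v : \mathrm{eff}^{\mathbf{1}}_\infty(v) \leq r \}$, and output the total function mapping each $v \in V \setminus I^{\mathbf{1}}(\leq r^* )$ to $\mathrm{eid}^{\mathbf{1}}_\infty(v)$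 and each $v \in I^{\mathbf{1}}(\leq r^* )$ to $\mathrm{emin}(v)$. *)

(* Data (benefits, costs, epsilon) are rationals as in the
   paper; the final bound, which involves sqrt n, is stated in the real closed
   field [realalg] (rationals embedded by [ratr]). *)
From HB Require Import structures.
From mathcomp Require Import all_boot all_order all_algebra.
From mathcomp Require Import realalg.
Set Implicit Arguments. Unset Strict Implicit. Unset Printing Implicit Defensive.
Import Order.TTheory GRing.Theory Num.Theory.
Local Open Scope ring_scope.

(* A weighted hypergraph given as a stream: vertices are the finite type V
   (n = #|V|), benefits b : V -> rat, edges e_0,...,e_{m-1} with vertex sets
   ev t and costs cost t.  The identifier of e_t is t.  The multiset E is the
   collection of these m edges. *)

Section Defs.
Variables (V : finType) (m : nat) (ev : nat -> {set V}) (cost : nat -> rat).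

Definition wsum (beta : V -> rat) (U : {set V}) : rat := \sum_(v in U) beta v.

Definition ecost (F : {set 'I_m}) : rat := \sum_(t in F) cost t.

Definition is_edge_cover (F : {set 'I_m}) : Prop :=
  forall v : V, exists2 t : 'I_m, t \in F & v \in ev t.

Definition is_min_edge_cover (F : {set 'I_m}) : Prop :=
  is_edge_cover F /\ forall F', is_edge_cover F' -> ecost F <= ecost F'.

Definition dom (chi : V -> option nat) : {set V} := [set v | chi v != None].
Definition img (chi : V -> option nat) : {set 'I_m} :=
  [set t : 'I_m | [exists v, chi v == Some (val t)]].

Definition is_cover_cert (b : V -> rat) (delta : rat) (chi : V -> option nat)
  : Prop :=
  (forall v t, chi v = Some t -> (t < m)%N /\ v \in ev t) /\
  delta * wsum b setT <= wsum b (dom chi).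

Definition is_ceil_lg (x : rat) (k : int) : Prop :=
  (2%:Q) ^ (k - 1) < x /\ x <= (2%:Q) ^ k.

(* eff values: None stands for -infinity *)
Definition eff_lt (e : option int) (l : int) : bool :=
  if e is Some k then k < l else true.
Definition eff_le (e : option int) (l : int) : bool :=
  if e is Some k then k <= l else true.

(* state of COVER: (eid, eff) *)
Definition cstate := ((V -> option nat) * (V -> option int))%type.
Definition cinit : cstate := (fun _ => None, fun _ => None).

Definition is_lev (beta : V -> rat) (t : nat) (T : {set V}) (l : int) : Prop :=
  is_ceil_lg (wsum beta T / cost t) l.

Definition effective (beta : V -> rat) (st : cstate) (t : nat)
  (T : {set V}) (l : int) : Prop :=
  T != set0 /\ T \subset ev t /\ is_lev beta t T l /\
  forall v, v \in T -> eff_lt (st.2 v) l.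

Definition cupdate (st : cstate) (t : nat) (T : {set V}) (l : int) : cstate :=
  (fun v => if v \in T then Some t else st.1 v,
   fun v => if v \in T then Some l else st.2 v).

(* processing of e_t: pick an effective T of largest beta(T) (any tie
   breaking); if only the empty set is effective nothing changes *)
Definition cover_step (beta : V -> rat) (t : nat) (st st' : cstate) : Prop :=
  (exists T l, effective beta st t T l /\
     (forall T' l', effective beta st t T' l' -> wsum beta T' <= wsum beta T) /\
     st' = cupdate st t T l)
  \/ ((forall T l, ~ effective beta st t T l) /\ st' = st).

Inductive cover_reach (beta : V -> rat) : nat -> cstate -> Prop :=
| CR0 : cover_reach beta 0 cinit
| CRS k st st' : cover_reach beta k st -> (k < m)%N -> cover_step beta k st st' ->
                 cover_reach beta k.+1 st'.

Definition cover_run (beta : V -> rat) (st : cstate) : Prop :=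
  cover_reach beta m st.

Definition emin_spec (emin : V -> option nat) : Prop :=
  forall v, exists t, emin v = Some t /\ (t < m)%N /\ v \in ev t /\
     forall t', (t' < m)%N -> v \in ev t' -> cost t <= cost t'.

Definition Ile (st : cstate) (r : int) : {set V} :=
  [set v | eff_le (st.2 v) r].

Definition sqrtn : realalg := Num.sqrt (#|V|%:R).

(* chi is the output of SSSC for epsilon, given the final states of P1
   (st1, benefits b), P2 (st2, unit benefits) and P3 (emin) *)
Definition sssc_output (b : V -> rat) (eps : rat) (st1 st2 : cstate)
  (emin : V -> option nat) (chi : V -> option nat) : Prop :=
  if 1 / sqrtn <= ratr eps then
    exists rstar : int,
      wsum b (Ile st1 rstar) <= eps * wsum b setT /\
      (forall r, wsum b (Ile st1 r) <= eps * wsum b setT -> r <= rstar) /\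
      chi = (fun v => if v \in Ile st1 rstar then None else st1.1 v)
  else
    exists rstar : int,
      (#|Ile st2 rstar|%:R <= sqrtn) /\
      (forall r, (#|Ile st2 r|%:R <= sqrtn) -> r <= rstar) /\
      chi = (fun v => if v \in Ile st2 rstar then emin v else st2.1 v).

End Defs.

(* min{1/eps, sqrt n}, with min{1/0, y} = y *)
Definition min_inv_sqrt (eps : rat) (n : nat) : realalg :=
  if eps == 0 then Num.sqrt (n%:R) else Num.min (ratr eps)^-1 (Num.sqrt (n%:R)).

From HB Require Import structures.
From mathcomp Require Import all_boot all_order all_algebra.
From mathcomp Require Import realalg.
From mathcomp Require Import zify ring lra.
Set Implicit Arguments. Unset Strict Implicit. Unset Printing Implicit Defensive.
Import Order.TTheory GRing.Theory Num.Theory.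
Local Open Scope ring_scope.

(* COVER pays for assigning e_t to a set T at level l by charging 2^(1-l) per
   unit of benefit to the vertices of T; this suffices because
   2^(l-1) < beta(T)/c(e_t).  A vertex only moves up in level, so it is charged
   at most sum_{j > r} 2^(1-j) = 2^(1-r) per unit for levels above r, and the
   edges still assigned to vertices of level > r cost at most 2^(1-r) beta(V).
   Conversely, every edge e satisfies beta(I(<= r) ∩ e) <= 2^r c(e): a heavier
   part of e would have been effective above level r when e arrived, and then
   it either meets the chosen set, or its union with the chosen set is a
   heavier effective set.  Summing over the edges of an optimal cover gives
   beta(I(<= r)) <= 2^r c(OPT).  At the threshold r* both bounds combine to
   eps * c(Im chi) <= 4 c(OPT).  For eps < 1/sqrt n the same argument with unit
   benefits bounds the assigned edges by 4 sqrt n c(OPT), and each of the at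
   most sqrt n vertices of I(<= r* ) takes its cheapest edge, of cost at most
   c(OPT). *)

Section NonnegSums.
Variables (R : numDomainType) (I : finType) (F : I -> R).
Hypothesis F_ge0 : forall i, 0 <= F i.

Lemma sumr_subset (A B : {set I}) :
  A \subset B -> \sum_(i in A) F i <= \sum_(i in B) F i.
Proof.
move=> AB; rewrite [X in _ <= X](big_setID A) (setIidPr AB) lerDl.
exact: sumr_ge0.
Qed.

Lemma sumr_setU_le (A B : {set I}) :
  \sum_(i in A :|: B) F i <= \sum_(i in A) F i + \sum_(i in B) F i.
Proof.
rewrite (big_setID A) setUK setDUl setDv set0U lerD2l.
exact/sumr_subset/subsetDl.
Qed.

End NonnegSums.

Lemma sumr_setU_disjoint (R : nmodType) (I : finType) (A B : {set I}) (F : I -> R) :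
  [disjoint A & B] -> \sum_(i in A :|: B) F i = \sum_(i in A) F i + \sum_(i in B) F i.
Proof.
by move=> AB; rewrite -bigU //; apply: eq_bigl => i; rewrite !inE.
Qed.

Lemma sumr_le_cover (R : numDomainType) (I J : finType) (F : I -> R)
    (A : {set I}) (K : {set J}) (B : J -> {set I}) :
  (forall i, 0 <= F i) -> (forall i, i \in A -> exists2 j, j \in K & i \in B j) ->
  \sum_(i in A) F i <= \sum_(j in K) \sum_(i in A :&: B j) F i.
Proof.
move=> F_ge0 cover.
rewrite (exchange_big_dep (mem A)) => [|j i _]; last by rewrite inE => /andP[].
apply: ler_sum => i iA; have [j jK iBj] := cover i iA.
by rewrite (bigD1 j) ?inE ?jK ?iA //= lerDl sumr_ge0.
Qed.

Lemma exists_ceil_log2 (R : archiRealFieldType) (x : R) :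
  0 < x -> exists k : int, 2 ^ (k - 1) < x <= 2 ^ k.
Proof.
move=> x_gt0; have xV_gt0 : 0 < x^-1 by rewrite invr_gt0.
have [N [xN xVN]] : exists N : nat, x < 2 ^ N%:Z /\ x^-1 < 2 ^ N%:Z.
  have sum_ge0 : 0 <= x + x^-1 by rewrite addr_ge0 // ltW.
  exists (Num.bound (x + x^-1)).
  have sum_lt : x + x^-1 < 2 ^ (Num.bound (x + x^-1))%:Z.
    by apply: lt_trans (archi_boundP sum_ge0) _; rewrite -exprnP -natrX ltr_nat ltn_expl.
  by split; apply: lt_trans sum_lt; rewrite ?ltrDl ?ltrDr.
pose above (j : nat) := x <= 2 ^ (j%:Z - N%:Z).
have [|j x_le min_j] := ex_minnP (_ : exists j, above j).
  by exists (N + N)%N; rewrite /above PoszD addrK ltW.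
case: j x_le min_j => [|j] x_le min_j.
  move: x_le; rewrite /above sub0r -invr_expz -[x]invrK.
  by rewrite lef_pV2 ?posrE ?invr_gt0 ?exprz_gt0 // leNgt xVN.
exists (j.+1%:Z - N%:Z); rewrite [_ <= _]x_le andbT.
have : ~~ above j by apply/negP => /min_j; rewrite ltnn.
rewrite /above -ltNge; suff -> : j.+1%:Z - N%:Z - 1 = j%:Z - N%:Z by [].
lia.
Qed.

Lemma ceil_lg_exists (x : rat) : 0 < x -> exists k, is_ceil_lg x k.
Proof. by move=> /exists_ceil_log2 [k /andP x_k]; exists k. Qed.

Lemma pow2_gt0 (a : int) : 0 < 2%:Q ^ a.
Proof. by rewrite exprz_gt0. Qed.

Lemma ler_pow2 (a b : int) : (2%:Q ^ a <= 2%:Q ^ b) = (a <= b).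
Proof. by rewrite ler_eXz2l // ltr1n. Qed.

Lemma ltr_pow2 (a b : int) : (2%:Q ^ a < 2%:Q ^ b) = (a < b).
Proof. by rewrite ltr_eXz2l // ltr1n. Qed.

Lemma pow2D (a b : int) : 2%:Q ^ (a + b) = 2%:Q ^ a * 2%:Q ^ b.
Proof. by rewrite expfzDr // pnatr_eq0. Qed.

Lemma pow2_double_le (a b : int) : a < b -> 2%:Q ^ a + 2%:Q ^ a <= 2%:Q ^ b.
Proof.
move=> ab; have : 2%:Q ^ (1 + a) <= 2%:Q ^ b by rewrite ler_pow2; lia.
by rewrite pow2D expr1z; lra.
Qed.

Lemma is_ceil_lg_le (x y : rat) (k l : int) :
  is_ceil_lg x k -> is_ceil_lg y l -> x <= y -> k <= l.
Proof.
move=> [kx _] [_ yl] xy.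
have : 2%:Q ^ (k - 1) < 2%:Q ^ l by apply: lt_le_trans kx (le_trans xy yl).
by rewrite ltr_pow2; lia.
Qed.

Lemma eff_le_lt_trans (e : option int) (r l : int) : eff_le e r -> r < l -> eff_lt e l.
Proof. by case: e => //= k; apply: le_lt_trans. Qed.

Lemma eff_lt_le_trans (e : option int) (l l' : int) :
  eff_lt e l -> l <= l' -> eff_lt e l'.
Proof. by case: e => //= k; apply: lt_le_trans. Qed.

Lemma eff_lt_le (e : option int) (l r : int) : eff_lt e l -> l <= r -> eff_le e r.
Proof. by case: e => //= k kl lr; rewrite ltW // (lt_le_trans kl lr). Qed.

(* The charge of a vertex at level k above threshold r is the geometric sum
   of 2^(1-j) over r < j <= k. *)
Definition charge (e : option int) (r : int) : rat :=
  if e is Some k then (if r < k then 2%:Q ^ (1 - r) - 2%:Q ^ (1 - k) else 0) else 0.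

Lemma charge_le (e : option int) (r : int) : charge e r <= 2%:Q ^ (1 - r).
Proof.
have := pow2_gt0 (1 - r); case: e => [k|] /=; last lra.
by case: ifP => _; have := pow2_gt0 (1 - k); lra.
Qed.

Lemma charge_raise (e : option int) (r l : int) : eff_lt e l ->
  charge e r + (if r < l then 2%:Q ^ (1 - l) else 0) <= charge (Some l) r.
Proof.
move=> el /=; case: (ltP r l) => [rl | lr].
  have : 2%:Q ^ (1 - l) + 2%:Q ^ (1 - l) <= 2%:Q ^ (1 - r).
    by apply: pow2_double_le; lia.
  case: e el => [k /= kl|_] /=; last lra.
  case: ifP => _; last lra.
  have : 2%:Q ^ (1 - l) + 2%:Q ^ (1 - l) <= 2%:Q ^ (1 - k).
    by apply: pow2_double_le; lia.
  lra.
case: e el => [k /= kl|_] /=; rewrite addr0 //.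
by rewrite ifN // -leNgt (le_trans (ltW kl)).
Qed.

Section Cover.
Variables (V : finType) (m : nat) (ev : nat -> {set V}) (cost : nat -> rat)
  (beta : V -> rat).
Hypothesis beta_gt0 : forall v, 0 < beta v.
Hypothesis cost_gt0 : forall t, (t < m)%N -> 0 < cost t.

Local Notation effective := (effective ev cost beta).
Local Notation cover_step := (cover_step ev cost beta).

Lemma wsum_subset (A B : {set V}) : A \subset B -> wsum beta A <= wsum beta B.
Proof. exact/sumr_subset/(fun v => ltW (beta_gt0 v)). Qed.

Lemma wsum_gt0 (A : {set V}) : A != set0 -> 0 < wsum beta A.
Proof.
case/set0Pn=> v vA; have vA' : [set v] \subset A by rewrite sub1set.
by apply: lt_le_trans (wsum_subset vA'); rewrite /wsum big_set1.
Qed.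

Lemma wsum_setT_split (A : {set V}) : wsum beta setT = wsum beta A + wsum beta (~: A).
Proof. by rewrite /wsum (big_setID A) setTI setTD. Qed.

Lemma Ile_step_subset k st st' r : cover_step k st st' -> Ile st' r \subset Ile st r.
Proof.
case=> [[T [l [[_ [_ [_ T_low]]] [_ ->]]]] | [_ ->] //].
apply/subsetP => v; rewrite !inE /=; case: ifP => // vT.
exact: eff_lt_le (T_low v vT).
Qed.

Lemma effectiveU st t (S T : {set V}) (lS lT : int) : (t < m)%N -> [disjoint S & T] ->
  effective st t S lS -> effective st t T lT -> exists l, effective st t (S :|: T) l.
Proof.
move=> tm ST [S0 [S_sub [S_lev S_low]]] [_ [T_sub [T_lev T_low]]].
have c_gt0 := cost_gt0 tm; have cV_ge0 : 0 <= (cost t)^-1 by rewrite invr_ge0 ltW.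
have SU : S :|: T != set0 by rewrite setU_eq0 negb_and S0.
have [l U_lev] := ceil_lg_exists (divr_gt0 (wsum_gt0 SU) c_gt0).
have lev_le (X : {set V}) lX : X \subset S :|: T -> is_lev cost beta t X lX -> lX <= l.
  move=> XU X_lev; apply: is_ceil_lg_le X_lev U_lev _.
  exact/ler_wpM2r/wsum_subset.
exists l; split=> //; split; first by rewrite subUset S_sub.
split=> // v; rewrite inE => /orP[vS | vT].
  exact/(eff_lt_le_trans (S_low v vS))/(lev_le S)/S_lev/subsetUl.
exact/(eff_lt_le_trans (T_low v vT))/(lev_le T)/T_lev/subsetUr.
Qed.

Lemma effective_meets_max st t (S T : {set V}) (lS lT : int) : (t < m)%N ->
  effective st t S lS -> effective st t T lT ->
  (forall T' l', effective st t T' l' -> wsum beta T' <= wsum beta T) ->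
  ~~ [disjoint S & T].
Proof.
move=> tm S_eff T_eff T_max; apply/negP => ST.
have [l U_eff] := effectiveU tm ST S_eff T_eff.
have := T_max _ _ U_eff; rewrite /wsum sumr_setU_disjoint //.
have := wsum_gt0 S_eff.1; rewrite /wsum; lra.
Qed.

(* If the heavy part [S] of [e_k] below level [r] survived the step, it was
   effective at a level above [r]; the chosen set then meets it and lifts one
   of its vertices above [r]. *)
Lemma wsum_Ile_edge_step k st st' r : (k < m)%N -> cover_step k st st' ->
  wsum beta (Ile st' r :&: ev k) <= 2%:Q ^ r * cost k.
Proof.
move=> km step; rewrite leNgt; apply/negP => heavy.
set S := Ile st' r :&: ev k in heavy.
have c_gt0 := cost_gt0 km.
have S_gt0 : 0 < wsum beta S := lt_trans (mulr_gt0 (pow2_gt0 r) c_gt0) heavy.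
have [l S_lev] := ceil_lg_exists (divr_gt0 S_gt0 c_gt0).
have rl : r < l.
  by rewrite -ltr_pow2 (lt_le_trans _ S_lev.2) // ltr_pdivlMr.
have S_eff : effective st k S l.
  split; first by apply: contraTneq S_gt0 => ->; rewrite /wsum big_set0 ltxx.
  split; first exact: subsetIr.
  split=> // v; rewrite inE => /andP[vI _].
  apply: eff_le_lt_trans rl.
  by move: (subsetP (Ile_step_subset r step) v vI); rewrite inE.
case: step => [[T [lT [T_eff [T_max st'E]]]] | [none _]]; last exact: none S l S_eff.
have l_lT : l <= lT.
  apply: is_ceil_lg_le S_lev T_eff.2.2.1 _.
  by rewrite ler_pM2r ?invr_gt0 //; apply: T_max S_eff.
have /pred0Pn[v /andP[vS vT]] := effective_meets_max km S_eff T_eff T_max.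
move: vS; rewrite !inE st'E /= (_ : v \in T) //= => /andP[lTr _].
by move: (lt_le_trans rl l_lT); rewrite ltNge lTr.
Qed.

Definition potential (st : cstate V) (r : int) : rat :=
  \sum_v beta v * charge (st.2 v) r.

Definition img_above (st : cstate V) (r : int) : {set 'I_m} :=
  img m (fun v => if v \in Ile st r then None else st.1 v).

Record cover_inv (k : nat) (st : cstate V) : Prop := CoverInv {
  eid_sound : forall v t, st.1 v = Some t -> (t < k)%N /\ v \in ev t;
  eid_None : forall v, (st.1 v == None) = (st.2 v == None);
  ecost_img_above : forall r, ecost cost (img_above st r) <= potential st r;
  wsum_Ile_edge : forall t r, (t < k)%N ->
    wsum beta (Ile st r :&: ev t) <= 2%:Q ^ r * cost t }.

Lemma img_above_update st k (T : {set V}) l r :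
  img_above (cupdate st k T l) r \subset
  img_above st r :|: [set t : 'I_m | (r < l) && (val t == k)].
Proof.
apply/subsetP => t; rewrite !inE => /existsP[v]; rewrite !inE /=.
case: (boolP (v \in T)) => vT /=.
  by case: leP => // _ /eqP[->]; rewrite eqxx orbT.
by move=> chi_v; apply/orP; left; apply/existsP; exists v; rewrite inE.
Qed.

Lemma ecost_update_edge (P : bool) k : (k < m)%N ->
  ecost cost [set t : 'I_m | P && (val t == k)] = if P then cost k else 0.
Proof.
move=> km; case: P; last by rewrite /ecost big_pred0 // => t; rewrite inE.
have -> : [set t : 'I_m | true && (val t == k)] = [set Ordinal km].
  by apply/setP => t; rewrite !inE -val_eqE.
by rewrite /ecost big_set1.
Qed.

Lemma cost_le_level_charge st k T l : (k < m)%N -> effective st k T l ->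
  cost k <= 2%:Q ^ (1 - l) * wsum beta T.
Proof.
move=> km [_ [_ [[lo _] _]]]; move: lo; rewrite ltr_pdivlMr ?cost_gt0 // => lo.
have -> : cost k = 2%:Q ^ (1 - l) * (2%:Q ^ (l - 1) * cost k).
  by rewrite mulrA -pow2D (_ : 1 - l + (l - 1) = 0) ?expr0z ?mul1r //; lia.
by apply: ler_wpM2l; [exact/ltW/pow2_gt0 | exact: ltW].
Qed.

Lemma potential_update st k (T : {set V}) l r :
  (forall v, v \in T -> eff_lt (st.2 v) l) ->
  potential st r + (if r < l then 2%:Q ^ (1 - l) else 0) * wsum beta T <=
  potential (cupdate st k T l) r.
Proof.
move=> T_low; rewrite /potential /wsum mulr_sumr [X in _ + X]big_mkcond -big_split.
apply: ler_sum => v _.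
rewrite -[X in _ <= _ * charge X r]/(if v \in T then Some l else st.2 v).
case vT: (v \in T) => /=; last by rewrite addr0.
rewrite -[X in _ <= _ * X]/(charge (Some l) r).
rewrite [_ * beta v]mulrC -mulrDr.
exact/ler_wpM2l/charge_raise/T_low/vT/ltW.
Qed.

Lemma cover_inv_step k st st' : (k < m)%N -> cover_inv k st ->
  cover_step k st st' -> cover_inv k.+1 st'.
Proof.
move=> km [sound eid_eff img_cost light] step.
have light' t r : (t < k.+1)%N -> wsum beta (Ile st' r :&: ev t) <= 2%:Q ^ r * cost t.
  rewrite ltnS leq_eqVlt => /predU1P[-> | tk].
    exact: wsum_Ile_edge_step r km step.
  by apply: le_trans (light t r tk); apply/wsum_subset/setSI/(Ile_step_subset r step).
case: step => [[T [l [T_eff [_ st'E]]]] | [_ st'E]]; subst st'; last first.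
  split=> // v t /(sound v t)[tk vt]; split=> //; exact: ltnW.
have [_ [T_sub [_ T_low]]] := T_eff.
split=> // [v t | v | r] /=; first 2 last.
- have c_ge0 (t : 'I_m) : 0 <= cost t by rewrite ltW ?cost_gt0.
  apply: le_trans (sumr_subset c_ge0 (img_above_update st k T l r)) _.
  apply: le_trans (sumr_setU_le c_ge0 _ _) _.
  apply: le_trans (potential_update k r T_low); apply: lerD; first exact: img_cost.
  rewrite -/(ecost _ _) ecost_update_edge //; case: ifP => _; last by rewrite mul0r.
  exact: cost_le_level_charge T_eff.
- case: ifP => [vT [<-] | _ /(sound v t)[tk vt]]; split=> //; last exact: ltnW.
  exact: (subsetP T_sub).
- by case: ifP.
Qed.

Lemma cover_inv_reach k st : cover_reach m ev cost beta k st -> cover_inv k st.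
Proof.
elim=> [|{}k {}st st' _ inv km step]; last exact: cover_inv_step km inv step.
split=> // r.
have -> : img_above (cinit V) r = set0.
  by apply/setP => t; rewrite !inE; apply/existsP => -[v]; case: ifP.
by rewrite /ecost big_set0 /potential big1 // => v _; rewrite mulr0.
Qed.

Lemma wsum_Ile_le_cover st r (F : {set 'I_m}) : cover_inv m st ->
  is_edge_cover ev F -> wsum beta (Ile st r) <= 2%:Q ^ r * ecost cost F.
Proof.
move=> inv F_cover.
have covered v : v \in Ile st r -> exists2 t : 'I_m, t \in F & v \in ev t.
  by move=> _; have [t tF vt] := F_cover v; exists t.
apply: (@le_trans _ _ (\sum_(t in F) wsum beta (Ile st r :&: ev t))).
  exact: sumr_le_cover (fun v => ltW (beta_gt0 v)) covered.
rewrite /ecost mulr_sumr.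
apply: (@ler_sum _ _ _ _ (fun t : 'I_m => wsum beta (Ile st r :&: ev t))) => t _.
exact: wsum_Ile_edge inv _ _ (ltn_ord t).
Qed.

Lemma ecost_img_above_le k st r : cover_inv k st ->
  ecost cost (img_above st r) <= 2%:Q ^ (1 - r) * wsum beta setT.
Proof.
move=> inv; apply: le_trans (ecost_img_above inv r) _.
rewrite /potential /wsum mulr_sumr.
rewrite [X in _ <= X](eq_bigl xpredT) => [|v]; last by rewrite inE.
apply: (@ler_sum _ _ _ _ (fun v => beta v * charge (st.2 v) r)) => v _.
by rewrite mulrC; apply: ler_wpM2r; [exact: ltW | exact: charge_le].
Qed.

Lemma ecost_img_above_mul_wsum_Ile st r (F : {set 'I_m}) :
  cover_inv m st -> is_edge_cover ev F ->
  ecost cost (img_above st r) * wsum beta (Ile st (r + 1)) <=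
  4 * wsum beta setT * ecost cost F.
Proof.
move=> inv F_cover.
have cost_ge0 : 0 <= ecost cost (img_above st r).
  by apply: sumr_ge0 => t _; rewrite ltW ?cost_gt0.
have := ler_pM cost_ge0 (sumr_ge0 _ (fun v _ => ltW (beta_gt0 v)))
  (ecost_img_above_le r inv) (wsum_Ile_le_cover (r + 1) inv F_cover).
have four : 2%:Q ^ (1 - r) * 2%:Q ^ (r + 1) = 4.
  by rewrite -pow2D (_ : 1 - r + (r + 1) = 2) //; lia.
by rewrite mulrACA four mulrA.
Qed.

Lemma ecost_img_above_threshold st r (F : {set 'I_m}) (x : rat) :
  cover_inv m st -> is_edge_cover ev F -> 0 < wsum beta setT ->
  x * wsum beta setT <= wsum beta (Ile st (r + 1)) ->
  x * ecost cost (img_above st r) <= 4 * ecost cost F.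
Proof.
move=> inv F_cover W_gt0 low.
have cost_ge0 : 0 <= ecost cost (img_above st r).
  by apply: sumr_ge0 => t _; rewrite ltW ?cost_gt0.
have prod := ecost_img_above_mul_wsum_Ile r inv F_cover.
rewrite -(ler_pM2l W_gt0); apply: le_trans (le_trans _ prod) _.
  rewrite (_ : _ * (x * _) = ecost cost (img_above st r) * (x * wsum beta setT)).
    exact: ler_wpM2l.
  by ring.
by rewrite mulrCA mulrA.
Qed.

End Cover.

Section Certificates.
Variables (V : finType) (m : nat) (cost : nat -> rat).

Lemma card_img_le (chi : V -> option nat) : (#|img m chi| <= #|dom chi|)%N.
Proof.
pose chi_ord v : option 'I_m := obind insub (chi v).
rewrite -(card_imset _ (@Some_inj _)).
apply: leq_trans (leq_imset_card chi_ord _); apply: subset_leq_card.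
apply/subsetP => _ /imsetP[t + ->]; rewrite inE => /existsP[v /eqP chi_v].
by apply/imsetP; exists v; rewrite ?inE /chi_ord chi_v //= valK.
Qed.

Lemma ecost_img_le (chi : V -> option nat) (M : rat) : 0 <= M ->
  (forall v t, chi v = Some t -> (t < m)%N -> cost t <= M) ->
  ecost cost (img m chi) <= #|dom chi|%:R * M.
Proof.
move=> M_ge0 chi_le; apply: le_trans (_ : \sum_(t in img m chi) M <= _).
  apply: ler_sum => t; rewrite inE => /existsP[v /eqP chi_v].
  exact: chi_le chi_v (ltn_ord t).
rewrite sumr_const -[M *+ _]mulr_natl.
by apply: ler_wpM2r; rewrite // ler_nat card_img_le.
Qed.

Lemma img_if_subset (A : {set V}) (f g : V -> option nat) :
  img m (fun v => if v \in A then f v else g v) \subset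
  img m (fun v => if v \in A then f v else None) :|:
  img m (fun v => if v \in A then None else g v).
Proof.
apply/subsetP => t; rewrite !inE => /existsP[v chi_v]; apply/orP.
by case: ifP chi_v => vA chi_v; [left | right]; apply/existsP; exists v; rewrite vA.
Qed.

End Certificates.

Lemma min_inv_sqrt_ge0 (eps : rat) (n : nat) : 0 <= eps -> 0 <= min_inv_sqrt eps n.
Proof.
move=> eps_ge0; rewrite /min_inv_sqrt; case: ifP => _; first exact: sqrtr_ge0.
by rewrite le_min sqrtr_ge0 invr_ge0 ler0q eps_ge0.
Qed.

Lemma min_inv_sqrt_large (eps : rat) (n : nat) : (0 < n)%N ->
  (Num.sqrt (n%:R : realalg))^-1 <= ratr eps -> min_inv_sqrt eps n = (ratr eps)^-1.
Proof.
move=> n_gt0 eps_large.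
have sq_gt0 : 0 < Num.sqrt (n%:R : realalg) by rewrite sqrtr_gt0 ltr0n.
have eps_gt0 : 0 < ratr eps :> realalg by apply: lt_le_trans eps_large; rewrite invr_gt0.
have eps_neq0 : eps != 0 by rewrite ltr0q in eps_gt0; rewrite gt_eqF.
rewrite /min_inv_sqrt ifN //.
by apply: min_l; rewrite -[X in _ <= X]invrK lef_pV2 ?posrE ?invr_gt0.
Qed.

Lemma min_inv_sqrt_small (eps : rat) (n : nat) : 0 <= eps ->
  ratr eps < (Num.sqrt (n%:R : realalg))^-1 -> min_inv_sqrt eps n = Num.sqrt n%:R.
Proof.
move=> eps_ge0 eps_small; rewrite /min_inv_sqrt; case: eqP => // /eqP eps_neq0.
have eps_gt0 : 0 < ratr eps :> realalg by rewrite ltr0q lt0r eps_neq0.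
have sq_gt0 : 0 < Num.sqrt (n%:R : realalg) by rewrite -invr_gt0 (lt_trans eps_gt0).
by apply/min_r/ltW; rewrite -[X in X < _]invrK ltf_pV2 ?posrE ?invr_gt0.
Qed.

Lemma wsum1 (V : finType) (A : {set V}) : wsum (fun _ => 1) A = #|A|%:R.
Proof. by rewrite /wsum sumr_const. Qed.

Section SSSC.
Variables (V : finType) (b : V -> rat) (m : nat) (ev : nat -> {set V})
  (cost : nat -> rat) (OPT : {set 'I_m}) (eps : rat).
Hypothesis b_gt0 : forall v, 0 < b v.
Hypothesis cost_gt0 : forall t, (t < m)%N -> 0 < cost t.
Hypothesis OPT_cover : is_edge_cover ev OPT.
Hypothesis eps_ge0 : 0 <= eps.

Let cost_ge0 (t : 'I_m) : 0 <= cost t. Proof. by rewrite ltW ?cost_gt0. Qed.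

Let ecost_ge0 (F : {set 'I_m}) : 0 <= ecost cost F.
Proof. exact: sumr_ge0. Qed.

Lemma sssc_cert_large st r : cover_inv m ev cost b m st ->
  wsum b (Ile st r) <= eps * wsum b setT ->
  is_cover_cert m ev b (1 - eps) (fun v => if v \in Ile st r then None else st.1 v).
Proof.
move=> inv low; split=> [v t | ].
  by case: ifP => // _; exact: (eid_sound inv (v := v) (t := t)).
have dom_above :
    ~: Ile st r \subset dom (fun v => if v \in Ile st r then None else st.1 v).
  apply/subsetP => v; rewrite !inE => v_above; rewrite (negbTE v_above) (eid_None inv).
  by move: v_above; case: (st.2 v).
apply: le_trans (wsum_subset b_gt0 dom_above).
have := wsum_setT_split b (Ile st r); lra.
Qed.

Lemma sssc_cert_small st emin r : cover_inv m ev cost (fun _ => 1) m st ->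
  emin_spec m ev cost emin ->
  is_cover_cert m ev b (1 - eps) (fun v => if v \in Ile st r then emin v else st.1 v).
Proof.
move=> inv emin_ok; split=> [v t | ].
  case: ifP => _; last exact: (eid_sound inv (v := v) (t := t)).
  by have [t' [-> [t'm [vt' _]]]] := emin_ok v; case=> <-.
have dom_full : [set: V] \subset dom (fun v => if v \in Ile st r then emin v else st.1 v).
  apply/subsetP => v _; rewrite inE; case: ifP => vI.
    by have [t [-> _]] := emin_ok v.
  by rewrite (eid_None inv); move: vI; rewrite inE; case: (st.2 v).
apply: le_trans (wsum_subset b_gt0 dom_full).
have W_ge0 : 0 <= wsum b setT by apply: sumr_ge0 => v _; exact: ltW.
by rewrite mulrBl mul1r gerBl mulr_ge0.
Qed.

Lemma sssc_bound_large st r : cover_inv m ev cost b m st ->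
  (sqrtn V)^-1 <= ratr eps -> eps * wsum b setT < wsum b (Ile st (r + 1)) ->
  ratr (ecost cost (img_above m st r)) <=
  5%:R * min_inv_sqrt eps #|V| * ratr (ecost cost OPT).
Proof.
move=> inv eps_large above.
have [V0 | n_gt0] := posnP #|V|.
  have -> : img_above m st r = set0.
    apply/setP => t; rewrite !inE; apply/existsP => -[v _].
    by have := card0_eq V0 v; rewrite !inE.
  rewrite /ecost big_set0 rmorph0.
  by rewrite mulr_ge0 ?ler0q ?ecost_ge0 // mulr_ge0 ?ler0n ?min_inv_sqrt_ge0.
rewrite min_inv_sqrt_large //.
have W_gt0 : 0 < wsum b setT.
  by apply: wsum_gt0 => //; apply/set0Pn; move/card_gt0P: n_gt0 => [v _]; exists v.
have eps_gt0 : 0 < eps.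
  rewrite -(ltr0q realalg); apply: lt_le_trans eps_large.
  by rewrite invr_gt0 sqrtr_gt0 ltr0n.
have := ecost_img_above_threshold b_gt0 cost_gt0 inv OPT_cover W_gt0 (ltW above).
rewrite -(ler_rat realalg) !rmorphM rmorph_nat /= => eps_cost.
have O_ge0 : 0 <= ratr (ecost cost OPT) :> realalg by rewrite ler0q.
rewrite mulrAC mulrC ler_pdivlMl ?ltr0q //; lra.
Qed.
Lemma ecost_img_patch_le (st : cstate V) emin (I : {set V}) : emin_spec m ev cost emin ->
  ecost cost (img m (fun v => if v \in I then emin v else st.1 v)) <=
  ecost cost (img m (fun v => if v \in I then None else st.1 v)) +
  #|I|%:R * ecost cost OPT.
Proof.
move=> emin_ok.
have emin_le v t : (if v \in I then emin v else None) = Some t -> (t < m)%N ->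
    cost t <= ecost cost OPT.
  case: ifP => // _; have [t' [-> [_ [vt' t'_min]]]] := emin_ok v; case=> <- _.
  have [u uOPT vu] := OPT_cover v; apply: le_trans (t'_min _ (ltn_ord u) vu) _.
  by rewrite /ecost (bigD1 u) //= lerDl sumr_ge0.
apply: le_trans (sumr_subset cost_ge0 (img_if_subset m I emin st.1)) _.
rewrite setUC; apply: le_trans (sumr_setU_le cost_ge0 _ _) _; apply: lerD => //.
apply: le_trans (ecost_img_le (ecost_ge0 OPT) emin_le) _.
apply: ler_wpM2r; first exact: ecost_ge0.
rewrite ler_nat subset_leq_card //.
by apply/subsetP => v; rewrite inE; case: ifP.
Qed.

Lemma sssc_bound_small st emin r : cover_inv m ev cost (fun _ => 1) m st ->
  emin_spec m ev cost emin -> ratr eps < (sqrtn V)^-1 ->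
  #|Ile st r|%:R <= sqrtn V -> sqrtn V < #|Ile st (r + 1)|%:R ->
  ratr (ecost cost (img m (fun v => if v \in Ile st r then emin v else st.1 v))) <=
  5%:R * min_inv_sqrt eps #|V| * ratr (ecost cost OPT).
Proof.
move=> inv emin_ok eps_small low_small above_large.
rewrite min_inv_sqrt_small // -/(sqrtn V).
have sq_gt0 : 0 < sqrtn V by rewrite -invr_gt0 (le_lt_trans _ eps_small) ?ler0q.
set I := Ile st r; set s := sqrtn V.
set G := ecost cost (img_above m st r); set O := ecost cost OPT.
have split_cost := ecost_img_patch_le st I emin_ok; rewrite -/G -/O in split_cost.
have prod := ecost_img_above_mul_wsum_Ile (fun _ => ltr01) cost_gt0 r inv OPT_cover.
rewrite !wsum1 cardsT -/G -/O in prod.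
have n_sq : (#|V|%:R : realalg) = s * s by rewrite -expr2 sqr_sqrtr ?ler0n.
have G_ge0 : 0 <= ratr G :> realalg by rewrite ler0q ecost_ge0.
have O_ge0 : 0 <= ratr O :> realalg by rewrite ler0q ecost_ge0.
move: prod split_cost; rewrite -!(ler_rat realalg) !rmorphD !rmorphM !rmorph_nat n_sq /=.
move=> prod split_cost; apply: (le_trans split_cost).
have G_le : ratr G <= 4 * s * ratr O.
  rewrite -(ler_pM2r sq_gt0).
  rewrite (_ : 4 * s * ratr O * s = 4 * (s * s) * ratr O); last by ring.
  by apply: le_trans prod; apply/ler_wpM2l/ltW.
have I_le : #|I|%:R * ratr O <= s * ratr O :> realalg by apply/ler_wpM2r.
rewrite (_ : 5%:R * s * ratr O = 4 * s * ratr O + s * ratr O); last by ring.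
exact: lerD.
Qed.

End SSSC.

Theorem theorem12 :
  exists C : realalg, 0 < C /\
  forall (V : finType) (b : V -> rat) (m : nat) (ev : nat -> {set V})
         (cost : nat -> rat),
    (forall v, 0 < b v) ->
    (forall t, (t < m)%N -> ev t != set0) ->
    (forall t, (t < m)%N -> 0 < cost t) ->
    (forall v : V, exists2 t, (t < m)%N & v \in ev t) ->
  forall OPT : {set 'I_m}, is_min_edge_cover ev cost OPT ->
  forall eps : rat, 0 <= eps < 1 ->
  forall (st1 st2 : cstate V) (emin : V -> option nat),
    cover_run m ev cost b st1 ->
    cover_run m ev cost (fun _ => 1) st2 ->
    emin_spec m ev cost emin ->
  forall chi : V -> option nat,
    sssc_output b eps st1 st2 emin chi ->
    is_cover_cert m ev b (1 - eps) chi /\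
    ratr (ecost cost (img m chi)) <= C * min_inv_sqrt eps #|V| * ratr (ecost cost OPT).
Proof.
exists 5%:R; split; first by rewrite ltr0n.
move=> V b m ev cost b_gt0 _ cost_gt0 _ OPT [OPT_cover _] eps /andP[eps_ge0 _]
  st1 st2 emin run1 run2 emin_ok chi.
have inv1 := cover_inv_reach b_gt0 cost_gt0 run1.
have inv2 := cover_inv_reach (fun _ => ltr01) cost_gt0 run2.
rewrite /sssc_output div1r.
case: ifP => [eps_large | /negbT eps_small] [r [r_low [r_max ->]]].
  have above : eps * wsum b setT < wsum b (Ile st1 (r + 1)).
    by rewrite ltNge; apply/negP => /r_max; lia.
  split; first exact (sssc_cert_large b_gt0 inv1 r_low).
  exact (sssc_bound_large b_gt0 cost_gt0 OPT_cover eps_ge0 inv1 eps_large above).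
have above : sqrtn V < #|Ile st2 (r + 1)|%:R.
  by rewrite ltNge; apply/negP => /r_max; lia.
split; first exact (sssc_cert_small b_gt0 eps_ge0 r inv2 emin_ok).
have eps_small' : ratr eps < (sqrtn V)^-1 by rewrite ltNge.
exact (sssc_bound_small cost_gt0 OPT_cover eps_ge0 inv2 emin_ok eps_small' r_low above).
Qed.
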